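(* Let $f:\mathbb{N}\to\mathbb{R}$ be a function with the following property: for every positive integer $h$, every asymptotic basis $A$ with $G(A)\le h$, and every finite subset $X\subseteq A$ such that $A\setminus X$ is an asymptotic basis (i.e. $G(A\setminus X)<\infty$), one has $$G(A\setminus X)\le d(X)\cdot f(h).$$ Then $\liminf_{h\to\infty} f(h)/h^3 \ge 1/27$.
   Context: All sets are sets of integers $A\subseteq\mathbb{Z}$ with $|A\cap\mathbb{Z}_{<0}|<\infty$. Such a set $A$ is an asymptotic basis if for some positive integer $h$ the $h$-fold sumset $hA=\{a_1+\dots+a_h: a_i\in A\}$ contains all but finitely many non-negative integers; the least such $h$ is the order $G(A)$ (and $G(A)=\infty$ if no such $h$ exists). For a finite set $X$ of integers with at least two elements, $\mathrm{diam}(X)=\max X-\min X$, $\delta(X)=\gcd\{x-y: x,y\in X\}$, and $d(X)=\mathrm{diam}(X)/\delta(X)$. *)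

From Stdlib Require Import Reals ZArith List.
Import ListNotations.
Open Scope R_scope.

Definition zset := Z -> Prop.

Definition fin_neg (A : zset) : Prop :=
  exists l : list Z, forall x, A x -> (x < 0)%Z -> In x l.

Definition in_sumset (A : zset) (h : nat) (n : Z) : Prop :=
  exists l : list Z, length l = h /\ Forall A l /\ fold_right Z.add 0%Z l = n.

Definition basis_of_order (A : zset) (h : nat) : Prop :=
  exists M : Z, forall n : Z, (M <= n)%Z -> in_sumset A h n.

Definition is_order (A : zset) (k : nat) : Prop :=
  (1 <= k)%nat /\ basis_of_order A k /\
  forall j, (1 <= j < k)%nat -> ~ basis_of_order A j.

Definition G_le (A : zset) (h : nat) : Prop :=
  exists k, (1 <= k <= h)%nat /\ basis_of_order A k.

Definition G_finite (A : zset) : Prop :=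
  exists k, (1 <= k)%nat /\ basis_of_order A k.

(* Finite sets X are given as lists; membership is In. *)
Definition zlist_max (X : list Z) : Z := fold_right Z.max (hd 0%Z X) X.
Definition zlist_min (X : list Z) : Z := fold_right Z.min (hd 0%Z X) X.
Definition diam (X : list Z) : Z := (zlist_max X - zlist_min X)%Z.
Definition delta (X : list Z) : Z :=
  fold_right Z.gcd 0%Z (flat_map (fun x => map (fun y => (x - y)%Z) X) X).
Definition dX (X : list Z) : R := IZR (diam X) / IZR (delta X).

Definition two_elems (X : list Z) : Prop :=
  exists x y, In x X /\ In y X /\ x <> y.

Definition setminus (A : zset) (X : list Z) : zset := fun x => A x /\ ~ In x X.

Definition liminf_ge (u : nat -> R) (c : R) : Prop :=
  forall eps, eps > 0 -> exists N : nat, forall n, (N <= n)%nat -> c - eps <= u n.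

From Stdlib Require Import Reals ZArith List Lia Lra Psatz Classical.
Import ListNotations.
Open Scope R_scope.

(* For an integer L >= 2 put m = L^3 + 1 and
       A_L = {0, 1, L^2 + L} U {L^2 + m*y : y >= 0},   X = {0, 1}.
   - A_L is an asymptotic basis of order <= 3L - 1: writing n - L^2 = m*Q + r
     with 0 <= r < m, the residue r (or r + m) is a sum of 3L - 2 elements
     among 0, 1, L^2 + L, L^2, read off the base-L digits of r, and the
     remaining summand L^2 + m*Q (or L^2 + m*(Q-1)) lies in A_L.
   - B_L = A_L \ X is still a basis (of order m), but every sum of k elements
     of B_L is congruent to k*L^2 + i*L modulo m with 0 <= i <= k; since L is
     invertible modulo m, some residue class is missed unless k >= L^3.
   As d(X) = 1, the hypothesis gives L^3 <= f h for every h >= 3L - 1; taking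
   L = floor((h+1)/3) >= (h-1)/3 yields f h / h^3 >= 1/27 - O(1/h). *)

Local Open Scope Z_scope.

Lemma fold_right_add_shift (l : list Z) (y : Z) :
  fold_right Z.add y l = fold_right Z.add 0 l + y.
Proof. induction l as [|x l IH]; simpl; lia. Qed.

Lemma in_sumset_add (A : zset) (a b : nat) (x y : Z) :
  in_sumset A a x -> in_sumset A b y -> in_sumset A (a + b) (x + y).
Proof.
  intros [l1 [Hl1 [HA1 Hs1]]] [l2 [Hl2 [HA2 Hs2]]].
  exists (l1 ++ l2); repeat split.
  - now rewrite length_app, Hl1, Hl2.
  - now apply Forall_app.
  - now rewrite fold_right_app, fold_right_add_shift, Hs1, Hs2.
Qed.

Lemma in_sumset_single (A : zset) (x : Z) : A x -> in_sumset A 1 x.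
Proof. intro Hx; exists [x]; repeat constructor; [assumption | simpl; lia]. Qed.

Lemma in_sumset_repeat (A : zset) (k x : Z) :
  (0 <= k) -> A x -> in_sumset A (Z.to_nat k) (k * x).
Proof.
  intros Hk Hx; rewrite <- (Z2Nat.id k) at 2 by exact Hk.
  induction (Z.to_nat k) as [|n IH]; [exists []; repeat constructor|].
  replace (S n) with (1 + n)%nat by lia.
  rewrite Nat2Z.inj_succ, Z.mul_succ_l, Z.add_comm.
  now apply in_sumset_add; [apply in_sumset_single|].
Qed.

Lemma in_sumset_pad (A : zset) (k h : nat) (n : Z) :
  A 0 -> (k <= h)%nat -> in_sumset A k n -> in_sumset A h n.
Proof.
  intros H0 Hkh Hn.
  pose proof (in_sumset_repeat A (Z.of_nat (h - k)) 0 ltac:(lia) H0) as Hz.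
  rewrite Nat2Z.id in Hz.
  replace h with (k + (h - k))%nat by lia; replace n with (n + Z.of_nat (h - k) * 0) by lia.
  now apply in_sumset_add.
Qed.

Lemma exists_order (B : zset) : G_finite B -> exists k, is_order B k.
Proof.
  intros [k0 [Hk0 Hb0]].
  assert (Hmin : forall n k, (k <= n)%nat -> (1 <= k)%nat -> basis_of_order B k ->
                             exists k', is_order B k').
  { induction n as [|n IH]; intros k Hkn Hk Hb; [lia|].
    destruct (classic (exists j, (1 <= j < k)%nat /\ basis_of_order B j))
      as [[j [Hj Hbj]] | Hnone].
    - apply (IH j); auto; lia.
    - exists k; repeat split; auto. intros j Hj Hbj; apply Hnone; eauto. }
  exact (Hmin k0 k0 (le_n _) Hk0 Hb0).
Qed.

Definition Aset (L : Z) : zset := fun x =>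
  x = 0 \/ x = 1 \/ x = (L*L + L) \/
  exists y, (0 <= y) /\ x = (L*L + (L*L*L + 1)*y).

Lemma Aset_large (L y : Z) : (0 <= y) -> Aset L (L*L + (L*L*L + 1)*y).
Proof. intro Hy; right; right; right; eauto. Qed.

Lemma Aset_square (L : Z) : Aset L (L*L).
Proof. right; right; right; exists 0; split; lia. Qed.

Lemma base_digits (L r : Z) : (2 <= L) -> (0 <= r <= L*L*L) ->
  exists r0 r1 r2, (0 <= r0 < L) /\ (0 <= r1 < L) /\ (0 <= r2 <= L) /\
                   r = (r0 + L*r1 + L*L*r2).
Proof.
  intros HL Hr.
  pose proof (Z.div_mod r L ltac:(lia)) as Hr_eq.
  pose proof (Z.mod_pos_bound r L ltac:(lia)) as Hr0.
  pose proof (Z.div_mod (r / L) L ltac:(lia)) as Hq_eq.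
  pose proof (Z.mod_pos_bound (r / L) L ltac:(lia)) as Hr1.
  assert (Hq : (0 <= r / L <= L*L)).
  { split; [apply Z.div_pos; lia|]. apply Z.div_le_upper_bound; nia. }
  assert (Hr2 : (0 <= r / L / L <= L)).
  { split; [apply Z.div_pos; lia|]. apply Z.div_le_upper_bound; nia. }
  exists (r mod L), (r / L mod L), (r / L / L); repeat split; lia.
Qed.

Lemma residue_repr (L r : Z) : (2 <= L) -> (0 <= r <= L*L*L) ->
  exists e, (0 <= e <= 1) /\
            in_sumset (Aset L) (Z.to_nat (3*L - 2)) (r + e*(L*L*L + 1)).
Proof.
  intros HL Hr.
  destruct (base_digits L r HL Hr) as [r0 [r1 [r2 [Hr0 [Hr1 [Hr2 ->]]]]]].
  assert (A0 : Aset L 0) by (left; reflexivity).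
  assert (A1 : Aset L 1) by (right; left; reflexivity).
  assert (AL : Aset L (L*L + L)) by (right; right; left; reflexivity).
  destruct (Z_le_gt_dec r1 r2) as [Hle | Hgt].
  - (* r = r0*1 + r1*(L^2+L) + (r2-r1)*L^2 *)
    exists 0; split; [lia|].
    apply in_sumset_pad with (Z.to_nat r0 + Z.to_nat r1 + Z.to_nat (r2 - r1))%nat;
      [exact A0 | lia |].
    replace (r0 + L*r1 + L*L*r2 + 0*(L*L*L+1))
      with (r0*1 + r1*(L*L + L) + (r2 - r1)*(L*L)) by ring.
    repeat apply in_sumset_add; apply in_sumset_repeat; auto using Aset_square; lia.
  - (* r + m = (r0+1)*1 + r1*(L^2+L) + (r2+L-r1)*L^2 *)
    exists 1; split; [lia|].
    apply in_sumset_pad with (Z.to_nat (r0 + 1) + Z.to_nat r1 + Z.to_nat (r2 + L - r1))%nat;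
      [exact A0 | lia |].
    replace (r0 + L*r1 + L*L*r2 + 1*(L*L*L+1))
      with ((r0 + 1)*1 + r1*(L*L + L) + (r2 + L - r1)*(L*L)) by ring.
    repeat apply in_sumset_add; apply in_sumset_repeat; auto using Aset_square; lia.
Qed.

Lemma Aset_basis (L : Z) (h : nat) : (2 <= L) -> (3*L - 1 <= Z.of_nat h) ->
  basis_of_order (Aset L) h.
Proof.
  intros HL Hh. set (m := (L*L*L + 1)).
  exists (L*L + m); intros n Hn.
  pose proof (Z.div_mod (n - L*L) m ltac:(unfold m; nia)) as Hdiv.
  pose proof (Z.mod_pos_bound (n - L*L) m ltac:(unfold m; nia)) as Hr.
  set (Q := ((n - L*L) / m)) in *; set (r := ((n - L*L) mod m)) in *.
  assert (HQ : (1 <= Q)) by nia.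
  destruct (residue_repr L r HL ltac:(unfold m in Hr; lia)) as [e [He Hrep]].
  apply in_sumset_pad with (Z.to_nat (3*L - 2) + 1)%nat; [left; reflexivity | lia |].
  replace n with (r + e*m + (L*L + m*(Q - e))) by lia.
  apply in_sumset_add; [exact Hrep|]. apply in_sumset_single, Aset_large; lia.
Qed.

Definition X01 : list Z := [0; 1].

Lemma dX_X01 : dX X01 = 1%R.
Proof. unfold dX; change (diam X01) with 1%Z; change (delta X01) with 1%Z; apply Rinv_r; discrR. Qed.

Lemma Bset_cases (L x : Z) : (2 <= L) -> setminus (Aset L) X01 x ->
  x = (L*L + L) \/ exists y, (0 <= y) /\ x = (L*L + (L*L*L + 1)*y).
Proof.
  intros HL [HA HX]. destruct HA as [H|[H|[H|H]]]; auto; subst; exfalso; apply HX; simpl; auto.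
Qed.

Lemma Bset_mid (L : Z) : (2 <= L) -> setminus (Aset L) X01 (L*L + L).
Proof. intro HL; split; [right; right; left; reflexivity | simpl; nia]. Qed.

Lemma Bset_large (L y : Z) : (2 <= L) -> (0 <= y) ->
  setminus (Aset L) X01 (L*L + (L*L*L + 1)*y).
Proof. intros HL Hy; split; [now apply Aset_large | simpl; nia]. Qed.

(* B_L is a basis of order m = L^3 + 1: n = i*(L^2+L) + (m-1-i)*L^2 + (L^2+m*y)
   where i = -n*L^2 mod m, using L * (-L^2) = 1 (mod m). *)
Lemma Bset_basis (L : Z) : (2 <= L) ->
  basis_of_order (setminus (Aset L) X01) (Z.to_nat (L*L*L + 1)).
Proof.
  intros HL. set (m := (L*L*L + 1)).
  assert (Hm : (0 < m)) by (unfold m; nia).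
  exists (m*L*L + m*L); intros n Hn.
  pose proof (Z.div_mod (-(n*L*L)) m ltac:(lia)) as Hdiv.
  pose proof (Z.mod_pos_bound (-(n*L*L)) m Hm) as Hi.
  set (q := (-(n*L*L) / m)) in *; set (i := (-(n*L*L) mod m)) in *.
  set (y := (n + q*L - L*L)).
  assert (Hn_eq : n = (i*(L*L + L) + (m - 1 - i)*(L*L) + (L*L + m*y)))
    by (unfold y, m in *; nia).
  assert (Hmy : m*y = n - i*L - m*L*L) by lia.
  assert (HiL : i*L < m*L) by (apply Z.mul_lt_mono_pos_r; lia).
  assert (Hy : 0 <= y) by (enough (0 < y) by lia; apply (Z.mul_pos_cancel_l m); lia).
  rewrite Hn_eq.
  replace (Z.to_nat m) with (Z.to_nat i + Z.to_nat (m - 1 - i) + 1)%nat by lia.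
  repeat apply in_sumset_add.
  - apply in_sumset_repeat; [lia | now apply Bset_mid].
  - apply in_sumset_repeat; [lia|].
    replace (L*L) with (L*L + (L*L*L + 1)*0) by ring; apply Bset_large; lia.
  - apply in_sumset_single, Bset_large; lia.
Qed.

Lemma Bset_sum_residue (L : Z) (l : list Z) : (2 <= L) ->
  Forall (setminus (Aset L) X01) l ->
  exists i q, (0 <= i <= Z.of_nat (length l)) /\
    fold_right Z.add 0 l = (Z.of_nat (length l) * (L*L) + i*L + (L*L*L + 1)*q).
Proof.
  intros HL HF; induction HF as [|x l Hx HF IH].
  - exists 0, 0; simpl; lia.
  - destruct IH as [i [q [Hi Hs]]]. cbn [length fold_right]. rewrite Nat2Z.inj_succ.
    destruct (Bset_cases L x HL Hx) as [-> | [y [Hy ->]]].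
    + exists (i + 1), q; split; [lia | rewrite Hs; ring].
    + exists i, (q + y); split; [lia | rewrite Hs; ring].
Qed.

(* L is invertible modulo L^3 + 1, so m cannot divide j*L for 0 < j < m. *)
Lemma cube_succ_not_div (L j : Z) : (1 <= j <= L*L*L) -> ~ (L*L*L + 1 | j*L).
Proof.
  intros Hj [w Hw].
  assert (Hdiv : (L*L*L + 1 | j)).
  { exists (j - w*(L*L)). replace j with ((L*L*L + 1)*j - j*L*(L*L)) at 1 by ring.
    rewrite Hw; ring. }
  apply Z.divide_pos_le in Hdiv; lia.
Qed.

(* G(B_L) >= L^3: for k < L^3 the integers k*L^2 + (k+1)*L (mod m) are missed. *)
Lemma Bset_order_lower (L : Z) (k : nat) : (2 <= L) ->
  basis_of_order (setminus (Aset L) X01) k -> (L*L*L <= Z.of_nat k).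
Proof.
  intros HL [M HM]. set (K := Z.of_nat k). set (m := (L*L*L + 1)).
  destruct (Z_le_gt_dec (L*L*L) K) as [| HK]; [assumption | exfalso].
  set (n := (K*(L*L) + (K + 1)*L + m*Z.abs M)).
  destruct (HM n ltac:(unfold n, m, K; nia)) as [l [Hlen [HF Hsum]]].
  destruct (Bset_sum_residue L l HL HF) as [i [q [Hi Hs]]].
  rewrite Hlen in Hi, Hs. fold K m in Hi, Hs.
  apply (cube_succ_not_div L (K + 1 - i)); [lia|].
  exists (q - Z.abs M). unfold n in Hsum. lia.
Qed.

Local Open Scope R_scope.

Definition removal_bound (f : nat -> R) : Prop :=
  forall (h : nat) (A : zset) (X : list Z),
    (1 <= h)%nat -> fin_neg A -> G_le A h ->
    (forall x, In x X -> A x) -> two_elems X ->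
    G_finite (setminus A X) ->
    forall k, is_order (setminus A X) k -> INR k <= dX X * f h.

Lemma cube_le_f (f : nat -> R) (L : Z) (h : nat) :
  removal_bound f -> (2 <= L)%Z -> (3*L - 1 <= Z.of_nat h)%Z -> IZR (L*L*L) <= f h.
Proof.
  intros Hf HL Hh.
  assert (HBfin : G_finite (setminus (Aset L) X01))
    by (exists (Z.to_nat (L*L*L + 1)); split; [lia | now apply Bset_basis]).
  destruct (exists_order _ HBfin) as [k Hk].
  assert (Hkf : INR k <= dX X01 * f h).
  { apply (Hf h (Aset L) X01); auto.
    - lia.
    - exists []; intros x Hx Hneg. destruct Hx as [->|[->|[->|[y [Hy ->]]]]]; nia.
    - exists h; split; [lia | apply Aset_basis; auto].
    - intros x [<-|[<-|[]]]; [left | right; left]; reflexivity.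
    - exists 0%Z, 1%Z; simpl; intuition discriminate. }
  rewrite dX_X01, Rmult_1_l in Hkf.
  destruct Hk as [_ [Hkb _]].
  apply Rle_trans with (INR k); [|exact Hkf].
  rewrite INR_IZR_INZ; apply IZR_le, Bset_order_lower; assumption.
Qed.

Lemma cube_ratio_bound (eps x y F : R) :
  0 < eps -> 1 <= x -> 1 <= eps * x -> (x - 1) / 3 <= y -> y^3 <= F ->
  1/27 - eps <= F / x^3.
Proof.
  intros Heps Hx Hex Hy HF.
  assert (Hy3 : ((x - 1)/3)^3 <= y^3) by (apply pow_incr; lra).
  assert (Hx3 : x^2 <= eps * x^3).
  { replace (eps * x^3) with ((eps * x) * x^2) by ring.
    assert (0 <= x^2) by (apply pow_le; lra). nra. }
  assert (Hkey : (1/27 - eps) * x^3 <= ((x - 1)/3)^3).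
  { replace (((x - 1)/3)^3) with ((x^3 - 3*x^2 + 3*x - 1)/27) by field. nra. }
  assert (Hxp : 0 < x^3) by (apply pow_lt; lra).
  apply Rmult_le_reg_r with (x^3); [exact Hxp|].
  unfold Rdiv at 2; rewrite Rmult_assoc, Rinv_l, Rmult_1_r by lra. lra.
Qed.

Theorem theorem1p2 (f : nat -> R) :
  (forall (h : nat) (A : zset) (X : list Z),
      (1 <= h)%nat -> fin_neg A -> G_le A h ->
      (forall x, In x X -> A x) -> two_elems X ->
      G_finite (setminus A X) ->
      forall k, is_order (setminus A X) k -> INR k <= dX X * f h) ->
  liminf_ge (fun h => f h / (INR h ^ 3)) (1 / 27).
Proof.
  intros Hf eps Heps.
  destruct (INR_unbounded (1/eps)) as [N0 HN0].
  exists (N0 + 5)%nat; intros n Hn.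
  (* L = floor((n+1)/3), so 3L - 1 <= n <= 3L + 1 and L >= 2. *)
  set (L := ((n + 1) / 3)%nat).
  assert (HLn : (3*L <= n + 1 < 3*L + 3)%nat).
  { pose proof (Nat.div_mod (n + 1) 3 ltac:(lia)).
    pose proof (Nat.mod_upper_bound (n + 1) 3 ltac:(lia)). lia. }
  assert (HfL : IZR (Z.of_nat L * Z.of_nat L * Z.of_nat L) <= f n)
    by (apply cube_le_f; [exact Hf | lia | lia]).
  rewrite <- !Nat2Z.inj_mul, <- INR_IZR_INZ, !mult_INR in HfL.
  apply (cube_ratio_bound eps (INR n) (INR L)); [exact Heps | | | | simpl; lra].
  - apply (le_INR 1); lia.
  - assert (HN : INR N0 <= INR n) by (apply le_INR; lia).
    assert (1/eps * eps = 1) by (field; lra). nra.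
  - assert (H3 : INR (n + 1) <= INR (3*L + 2)) by (apply le_INR; lia).
    rewrite plus_INR, plus_INR, mult_INR in H3; simpl in H3; lra.
Qed.
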